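(* Let $a,b,x\in M_d(\mathbb{C})$ be three matrices, where $b$ is Hermitian and positive definite, and suppose $bx+xb=a$. Then \[\|x\|\le\sqrt{\tfrac d2}\,\|b^{-1}\|\,\|a\|,\] where $\|\cdot\|$ denotes the Frobenius norm $\|x\|=\sqrt{\operatorname{tr}(xx^* )}$. *)

From HB Require Import structures.
From mathcomp Require Import all_boot all_order all_algebra.
Set Implicit Arguments. Unset Strict Implicit. Unset Printing Implicit Defensive.
Import Order.TTheory GRing.Theory Num.Theory.
Local Open Scope ring_scope.
Local Open Scope sesquilinear_scope.

Definition frob {C : numClosedFieldType} (d : nat) (x : 'M[C]_d) : C :=
  sqrtC (\tr (x *m x ^t*)).

Definition posdefmx {C : numClosedFieldType} (d : nat) (b : 'M[C]_d) : Prop :=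
  b \is hermsymmx /\
  forall v : 'rV[C]_d, v != 0 -> 0 < (v *m b *m v ^t*) 0 0.

(* For positive definite [b], Cauchy-Schwarz for the form [tr (u b v^* )]
   gives [|x|^2 <= |b^-1| tr (x b x^* )].  Applying this to [x] and [x^*] and
   adding, the right-hand sides sum to [|b^-1| tr (a x^* )] because
   [tr (a x^* ) = tr (x b x^* ) + tr (x^* b x)], and
   [tr (a x^* ) <= |a| |x|]; hence [2 |x| <= |b^-1| |a|].  This is stronger
   than the claim, since [1/2 <= sqrt (d/2)] as soon as [d >= 1], and for
   [d = 0] there is nothing to prove. *)

From HB Require Import structures.
From mathcomp Require Import all_boot all_order all_algebra.

Set Implicit Arguments. Unset Strict Implicit. Unset Printing Implicit Defensive.
Import Order.TTheory GRing.Theory Num.Theory.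
Local Open Scope ring_scope.
Local Open Scope sesquilinear_scope.

Section TraceForm.
Variable C : numClosedFieldType.

Lemma mxtrace_mul_ctmx m n (u v : 'M[C]_(m, n)) :
  \tr (u *m v^t*) = \sum_i \sum_j u i j * (v i j)^*.
Proof.
by apply: eq_bigr => i _; rewrite !mxE; apply: eq_bigr => j _; rewrite !mxE.
Qed.

Lemma mxtrace_mul_ctmx_rows m n (u v : 'M[C]_(m, n)) :
  \tr (u *m v^t*) = \sum_i \tr (row i u *m (row i v)^t*).
Proof.
rewrite mxtrace_mul_ctmx; apply: eq_bigr => i _.
by rewrite mxtrace_mul_ctmx big_ord1; apply: eq_bigr => j _; rewrite !mxE.
Qed.

Lemma posdefmx_ctmx n (b : 'M[C]_n) : posdefmx b -> b^t* = b.
Proof. by move=> [/is_hermitianmxP hb _]; rewrite [in RHS]hb expr0 scale1r. Qed.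

Lemma posdefmx_unit n (b : 'M[C]_n) : posdefmx b -> b \in unitmx.
Proof.
move=> [_ b_pos]; rewrite -row_free_unit -kermx_eq0; apply/eqP/row_matrixP => i.
rewrite row0; apply/eqP/negPn/negP => /b_pos.
by rewrite -row_mul mulmx_ker row0 mul0mx mxE ltxx.
Qed.

Lemma posdefmx_invmx_ctmx n (b : 'M[C]_n) : posdefmx b -> (invmx b)^t* = invmx b.
Proof. by move=> b_posdef; rewrite trmx_inv map_invmx posdefmx_ctmx. Qed.

Lemma posdefmx1 n : posdefmx (1%:M : 'M[C]_n).
Proof.
split; first by apply/is_hermitianmxP; rewrite expr0 scale1r trmx1 map_mx1.
by move=> v v_neq0; rewrite mulmx1 -dotmxE dnorm_gt0.
Qed.

Section PosDef.
Variables (n : nat) (b : 'M[C]_n).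
Hypothesis b_posdef : posdefmx b.

Lemma mxtrace_posdef_gt0 m (u : 'M[C]_(m, n)) : u != 0 -> 0 < \tr (u *m b *m u^t*).
Proof.
move=> u_neq0; have [i ui_neq0] : exists i, row i u != 0.
  apply/existsP; apply: contraNT u_neq0 => /existsPn ui0.
  by apply/eqP/row_matrixP => i; rewrite row0; apply/eqP/negbNE.
have row_pos j : row j u != 0 -> 0 < \tr (row j u *m b *m (row j u)^t*).
  by move=> /b_posdef.2; rewrite trace_mx11.
rewrite mxtrace_mul_ctmx_rows; under eq_bigr do rewrite row_mul.
rewrite (bigD1 i) //= ltr_wpDr ?row_pos //.
apply: sumr_ge0 => j _; have [->|uj_neq0] := eqVneq (row j u) 0.
  by rewrite !mul0mx mxtrace0.
exact/ltW/row_pos.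
Qed.

Lemma mxtrace_posdef_ge0 m (u : 'M[C]_(m, n)) : 0 <= \tr (u *m b *m u^t*).
Proof.
have [->|u_neq0] := eqVneq u 0; first by rewrite !mul0mx mxtrace0.
exact/ltW/mxtrace_posdef_gt0.
Qed.

Let b_herm := HermitianMx b_posdef.1.

(* [(u, v) |-> tr (u b v^* )] is a dot product on [m x n] matrices, so the
   library's Cauchy-Schwarz inequality applies to it. *)
HB.instance Definition _ m := isDotProduct.Build C 'M[C]_(m, n)
  (form_of_matrix Num.conj b_herm) (@mxtrace_posdef_gt0 m).

Lemma mxtrace_CauchySchwarz m (u v : 'M[C]_(m, n)) :
  `|\tr (u *m b *m v^t*)| ^+ 2 <= \tr (u *m b *m u^t*) * \tr (v *m b *m v^t*).
Proof. exact: (CauchySchwarz (form_of_matrix Num.conj b_herm) u v). Qed.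

End PosDef.

Lemma mxtrace_ctmx_ge0 m n (u : 'M[C]_(m, n)) : 0 <= \tr (u *m u^t*).
Proof. by have := mxtrace_posdef_ge0 (posdefmx1 n) u; rewrite mulmx1. Qed.

Lemma mxtrace_ctmx_CauchySchwarz m n (u v : 'M[C]_(m, n)) :
  `|\tr (u *m v^t*)| ^+ 2 <= \tr (u *m u^t*) * \tr (v *m v^t*).
Proof. by have := mxtrace_CauchySchwarz (posdefmx1 n) u v; rewrite !mulmx1. Qed.

End TraceForm.

Section Frobenius.
Variables (C : numClosedFieldType) (n : nat).
Implicit Types x y : 'M[C]_n.

Lemma frob_ge0 x : 0 <= frob x.
Proof. by rewrite sqrtC_ge0 mxtrace_ctmx_ge0. Qed.

Lemma frob0 : frob (0 : 'M[C]_n) = 0.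
Proof. by rewrite /frob mul0mx mxtrace0 sqrtC0. Qed.

Lemma frobK x : frob x ^+ 2 = \tr (x *m x^t*).
Proof. by rewrite sqrtCK. Qed.

Lemma frob_ctmx x : frob (x^t*) = frob x.
Proof. by rewrite /frob trmxCK mxtrace_mulC. Qed.

Lemma norm_mxtrace_le_frob x y : `|\tr (x *m y^t*)| <= frob x * frob y.
Proof.
rewrite -(sqrCK (normr_ge0 _)) -sqrtCM ?nnegrE ?mxtrace_ctmx_ge0 //.
by rewrite ler_sqrtC ?nnegrE ?mulr_ge0 ?mxtrace_ctmx_ge0 ?mxtrace_ctmx_CauchySchwarz.
Qed.

Lemma frob_mulmx x y : frob (x *m y) <= frob x * frob y.
Proof.
rewrite -sqrtCM ?nnegrE ?mxtrace_ctmx_ge0 //.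
rewrite ler_sqrtC ?nnegrE ?mulr_ge0 ?mxtrace_ctmx_ge0 //.
have -> : \tr (y *m y^t*) = \tr (y^t* *m y^t*^t*) by rewrite trmxCK mxtrace_mulC.
rewrite mxtrace_mul_ctmx.
rewrite !mxtrace_mul_ctmx_rows big_distrl /=; apply: ler_sum => i _.
rewrite big_distrr /=; apply: ler_sum => j _.
have -> : (x *m y) i j = \tr (row i x *m (row j (y^t*))^t*).
  rewrite mxtrace_mul_ctmx big_ord1 mxE.
  by apply: eq_bigr => k _; rewrite !mxE conjCK.
by rewrite -normCK mxtrace_ctmx_CauchySchwarz.
Qed.

End Frobenius.

Section Sylvester.
Variables (C : numClosedFieldType) (n : nat).

(* Cauchy-Schwarz for the [b]-form at [x] and [x b^-1] gives
   [tr (x x^* )^2 <= tr (x b x^* ) tr (x b^-1 x^* )], and the last factor is at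
   most [|b^-1| |x|^2]. *)
Lemma frob_sqr_le_invmx (b : 'M[C]_n) : posdefmx b ->
  forall x, frob x ^+ 2 <= frob (invmx b) * \tr (x *m b *m x^t*).
Proof.
move=> b_posdef x; have b_unit := posdefmx_unit b_posdef.
set B := invmx b; set T := \tr (x *m b *m x^t*).
have T_ge0 : 0 <= T := mxtrace_posdef_ge0 b_posdef x.
have [->|x_neq0] := eqVneq x 0; first by rewrite frob0 expr0n mulr_ge0 ?frob_ge0.
have fx_gt0 : 0 < frob x ^+ 2.
  by rewrite frobK -[x in x *m _]mulmx1 (mxtrace_posdef_gt0 (posdefmx1 C n)).
have ctmx_xB : (x *m B)^t* = B *m x^t*.
  by rewrite trmx_mul map_mxM posdefmx_invmx_ctmx.
have cross : \tr (x *m b *m (x *m B)^t*) = frob x ^+ 2.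
  by rewrite ctmx_xB mulmxA (mulmxK b_unit) frobK.
have self : \tr (x *m B *m b *m (x *m B)^t*) = \tr (x *m B *m x^t*).
  by rewrite (mulmxKV b_unit) ctmx_xB mulmxA.
have Q_le : \tr (x *m B *m x^t*) <= frob B * frob x ^+ 2.
  rewrite -self -[leLHS]ger0_norm ?mxtrace_posdef_ge0 // self.
  apply: le_trans (norm_mxtrace_le_frob _ _) _.
  rewrite expr2 mulrA (mulrC (frob B)).
  by apply: ler_wpM2r; [exact: frob_ge0 | exact: frob_mulmx].
have := mxtrace_CauchySchwarz b_posdef x (x *m B).
rewrite -/B cross (ger0_norm (ltW fx_gt0)) self -/T => CS.
have : frob x ^+ 2 * frob x ^+ 2 <= frob B * T * frob x ^+ 2.
  rewrite -expr2 (le_trans CS) // -mulrA mulrCA.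
  by apply: ler_wpM2l.
by rewrite ler_pM2r.
Qed.

Lemma frob_sylvester_solution_le (a b x : 'M[C]_n) :
  posdefmx b -> b *m x + x *m b = a -> frob x *+ 2 <= frob (invmx b) * frob a.
Proof.
move=> b_posdef ab_x; set N := frob (invmx b).
have tr_a : \tr (a *m x^t*) = \tr (x *m b *m x^t*) + \tr (x^t* *m b *m x).
  rewrite -ab_x mulmxDl mxtraceD addrC.
  by rewrite [\tr (b *m x *m _)]mxtrace_mulC mulmxA.
have tr_a_ge0 : 0 <= \tr (a *m x^t*).
  rewrite tr_a addr_ge0 ?mxtrace_posdef_ge0 //.
  by have := mxtrace_posdef_ge0 b_posdef (x^t*); rewrite trmxCK.
have sq : frob x ^+ 2 *+ 2 <= N * (frob a * frob x).
  have := frob_sqr_le_invmx b_posdef (x^t*); rewrite frob_ctmx trmxCK => le_ct.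
  rewrite mulr2n; apply: le_trans (lerD (frob_sqr_le_invmx b_posdef x) le_ct) _.
  rewrite -mulrDr -tr_a ler_wpM2l ?frob_ge0 // -[leLHS]ger0_norm //.
  exact: norm_mxtrace_le_frob.
have [->|fx_neq0] := eqVneq (frob x) 0; first by rewrite mul0rn mulr_ge0 ?frob_ge0.
have fx_gt0 : 0 < frob x by rewrite lt_def fx_neq0 frob_ge0.
by rewrite -(ler_pM2r fx_gt0) mulrnAl -expr2 -mulrA.
Qed.

End Sylvester.

Lemma invn2_le_sqrtC_half (C : numClosedFieldType) (d : nat) :
  (0 < d)%N -> 2^-1 <= sqrtC (d%:R / 2 : C).
Proof.
move=> d_gt0; have inv2_gt0 : 0 < 2^-1 :> C by rewrite invr_gt0 ltr0n.
rewrite -[leLHS](sqrCK (ltW inv2_gt0)).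
rewrite ler_sqrtC ?nnegrE ?exprn_ge0 ?divr_ge0 ?invr_ge0 ?ler0n //.
rewrite expr2 ler_pM2r // (le_trans _ (_ : 1 <= d%:R)) ?ler1n //.
by rewrite invf_le1 ?ler1n ?ltr0n.
Qed.

Theorem lemma4p9 (C : numClosedFieldType) (d : nat) (a b x : 'M[C]_d) :
  posdefmx b -> b *m x + x *m b = a ->
  frob x <= sqrtC (d%:R / 2) * frob (invmx b) * frob a.
Proof.
move=> b_posdef ab_x; have := frob_sylvester_solution_le b_posdef ab_x.
have rhs_ge0 : 0 <= frob (invmx b) * frob a by rewrite mulr_ge0 ?frob_ge0.
have [->|fx_neq0] := eqVneq (frob x) 0.
  by rewrite -mulrA mulr_ge0 ?sqrtC_ge0 ?divr_ge0 ?ler0n.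
have d_gt0 : (0 < d)%N.
  by case: d {a b b_posdef ab_x rhs_ge0} x fx_neq0 => // x; rewrite thinmx0 frob0 eqxx.
move=> fx2_le; rewrite -mulrA mulrC.
apply: le_trans (ler_wpM2l rhs_ge0 (invn2_le_sqrtC_half C d_gt0)).
by rewrite ler_pdivlMr ?ltr0n // mulr_natr.
Qed.
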